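(* Let $K$ be a field with algebraic closure $\overline{K}$, let $U=\{u_1,\dots,u_d\}$ be parameters and $X=\{x_1,\dots,x_n\}$ variables with $u_1\prec\dots\prec u_d\prec x_1\prec\dots\prec x_n$. Let $\mathbf{P}_1$ be a parametric system in $K[U][X]$ and let $\mathbb{S}=\{\mathbf{C}_1,\dots,\mathbf{C}_m\}$ be a Wu's decomposition of $\mathbf{P}_1$ in $K[U][X]$. Let $\mathcal{L}=\{\mathbf{C}_{l,1},\dots,\mathbf{C}_{l,k}\}\subseteq\mathbb{S}$ be a line of $\mathbb{S}$ with corresponding systems $\{\mathbf{P}_1,\dots,\mathbf{P}_k\}$. Then for every $a\in\overline{K}^d\setminus \mathrm{V}^U(\mathbf{C}_{l,k})$ and every $i$ with $1\le i\le k$, there exists a polynomial $p_i\in\mathbf{P}_i$ such that $p_i(a)$ is not the zero polynomial of $\overline{K}[X]$.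
   Context: A polynomial system is a non-empty finite subset of $K[U][X]$; it is a parametric system if it is contained in $K[U][X]\setminus K[X]$. For $F\in K[U][X]\setminus\{0\}$, its class $\mathrm{cls}(F)$ is the largest $p$ with $\deg(F,x_p)>0$ (and $0$ if no $x_i$ occurs); if $\mathrm{cls}(F)=p>0$, the main variable is $x_p$, and writing $F=C_0x_p^m+\dots+C_m$ with $C_0\ne0$, the initial is $\mathrm{I}(F)=C_0$ and the rank is $x_p^m$. A triangular set is a finite set $\{T_1,\dots,T_r\}\subset K[U][X]$ with $0<\mathrm{cls}(T_1)<\dots<\mathrm{cls}(T_r)$; $\mathrm{I}(\mathbf{T})=\prod_i \mathrm{I}(T_i)$. $F$ is reduced w.r.t. $\mathbf{T}$ if $\deg(F,\mathrm{mvar}(T_i))<\deg(T_i,\mathrm{mvar}(T_i))$ for all $i$. A non-contradictory ascending chain is a triangular set with each $T_i$ reduced w.r.t. $\{T_1,\dots,T_{i-1}\}$; a contradictory ascending chain is a set $\{F\}$ with $F\in K[U]$, $F\ne0$; an ascending chain is either. For a triangular set $\mathbf{T}=\{T_1,\dots,T_r\}$, $\mathrm{prem}(F,\mathbf{T})=\mathrm{prem}(\dots\mathrm{prem}(\mathrm{prem}(F,T_r),T_{r-1})\dots,T_1)$ (successive pseudo-remainders with respect to the main variables). An ascending chain $\mathbf{C}$ is a characteristic set of $\mathbf{P}$ if $\mathbf{C}\subset\langle\mathbf{P}\rangle_{K[U][X]}$ and $\mathrm{prem}(P,\mathbf{C})=0$ for all $P\in\mathbf{P}$. A Wu's decomposition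 of $\mathbf{P}$ is the finite set of ascending chains produced by Wu's method: compute a characteristic set $\mathbf{C}$ of $\mathbf{P}$ (contradictory or not); if $\mathbf{C}=\{C_1,\dots,C_t\}$ is non-contradictory, recursively apply the method to each system $\mathbf{P}\cup\mathbf{C}\cup\{\mathrm{I}(C_i)\}$; all characteristic sets so obtained form the decomposition. A subset $\mathcal{L}=\{\mathbf{C}_{l,1},\dots,\mathbf{C}_{l,k}\}$ of a Wu's decomposition $\mathbb{S}$ of $\mathbf{P}_1$ is a line, with corresponding systems $\mathbf{P}_1,\dots,\mathbf{P}_k$, if: (1) $\mathbf{C}_{l,1}$ is a characteristic set of $\mathbf{P}_1$; (2) if $k\ge2$, for each $2\le i\le k$, $\mathbf{C}_{l,i}$ is a characteristic set of $\mathbf{P}_i=\mathbf{P}_{i-1}\cup\mathbf{C}_{l,i-1}\cup\{\mathrm{I}(C_{l,i-1})\}$ for some $C_{l,i-1}\in\mathbf{C}_{l,i-1}$; (3) if $k=1$, $\mathbf{C}_{l,1}$ is contradictory; otherwise $\mathbf{C}_{l,1},\dots,\mathbf{C}_{l,k-1}$ are non-contradictory and $\mathbf{C}_{l,k}$ is contradictory. For $a\in\overline{K}^d$ and $F\in K[U][X]$, $F(a)\in\overline{K}[X]$ denotes the substitution $U\mapsto a$. For $\mathbf{B}\subset K[U]$, $\mathrm{V}^U(\mathbf{B})=\{a\in\overline{K}^d: B(a)=0\ \forall B\in\mathbf{B}\}$. *)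

From HB Require Import structures.
From mathcomp Require Import all_boot all_order all_algebra.
From mathcomp Require Import mpoly.
Set Implicit Arguments. Unset Strict Implicit. Unset Printing Implicit Defensive.
Import Order.TTheory GRing.Theory.
Local Open Scope ring_scope.

(* K[U][X] is represented as {mpoly {mpoly K[d]}[n]} : polynomials in the n
   variables X = x_1..x_n (indexed by 'I_n, x_{j+1} <-> 'X_j) with
   coefficients in K[U] = {mpoly K[d]} (u_1..u_d <-> 'I_d).  The ordering
   u_1 < ... < u_d < x_1 < ... < x_n is built into this representation:
   the class only looks at the X-variables.  Finite sets of polynomials are
   represented by sequences (membership = \in, union = concatenation). *)

Section Wu.
Variables (K : fieldType) (d n : nat).
Local Notation KU := {mpoly K[d]}.
Local Notation A := {mpoly KU[n]}.

Definition degX (j : 'I_n) (F : A) : nat := (\max_(m <- msupp F) m j)%N.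

Definition mvar (F : A) : option 'I_n :=
  [pick j : 'I_n | (0 < degX j F)%N &&
                   [forall j' : 'I_n, (j < j')%N ==> (degX j' F == 0%N)]].

Definition cls (F : A) : nat := if mvar F is Some j then j.+1 else 0%N.

(* F as a univariate polynomial in x_j with coefficients in K[U][X]
   (the coefficients do not involve x_j) *)
Definition mset0 (j : 'I_n) (m : 'X_{1..n}) : 'X_{1..n} :=
  [multinom (if i == j then 0%N else m i) | i < n].

Definition uni (j : 'I_n) (F : A) : {poly A} :=
  \sum_(m <- msupp F) (F@_m *: 'X_[mset0 j m])%:P * 'X^(m j).

Definition fromuni (j : 'I_n) (q : {poly A}) : A := q.['X_j].

(* initial: leading coefficient w.r.t. the main variable
   (only meaningful when cls F > 0; set to F otherwise) *)
Definition init (F : A) : A :=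
  if mvar F is Some j then lead_coef (uni j F) else F.

(* Classical pseudo-remainder of univariate polynomials over the domain A:
   the unique r with deg r < deg g and lc(g)^s f = q g + r,
   s = max(deg f - deg g + 1, 0), computed by the textbook loop. *)
Fixpoint prem_loop (g r : {poly A}) (k : nat) : {poly A} :=
  if k is k'.+1 then
    let i := ((size g).-1 + k')%N in
    prem_loop g (lead_coef g *: r - r`_i *: ('X^k' * g)) k'
  else r.

Definition prem_poly (f g : {poly A}) : {poly A} :=
  prem_loop g f (if (size g <= size f)%N then (size f - size g).+1 else 0%N).

(* prem(F, G) with respect to the main variable of G; for G of class 0
   (an element of K[U]), pseudo-division leaves remainder 0. *)
Definition prem1 (F G : A) : A :=
  if mvar G is Some j then fromuni j (prem_poly (uni j F) (uni j G)) else 0.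

Definition premT (F : A) (T : seq A) : A := foldr (fun G acc => prem1 acc G) F T.

Definition triangular (T : seq A) : bool :=
  all (fun G => (0 < cls G)%N) T && sorted (fun p q => (cls p < cls q)%N) T.

Definition reduced (F : A) (T : seq A) : bool :=
  all (fun G => if mvar G is Some j then (degX j F < degX j G)%N else true) T.

Definition noncontra_chain (T : seq A) : bool :=
  triangular T &&
  all (fun i => reduced (nth 0 T i) (take i T)) (iota 0 (size T)).

Definition inKU (F : A) : bool := F == (F@_mnm0)%:MP.

Definition contra_chain (T : seq A) : bool :=
  if T is [:: F] then (F != 0) && inKU F else false.

Definition asc_chain (T : seq A) : bool := noncontra_chain T || contra_chain T.

Definition in_ideal (P : seq A) (f : A) : Prop :=
  exists cs : seq A, f = \sum_(i < size P) cs`_i * P`_i.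

Definition charset (P C : seq A) : Prop :=
  asc_chain C /\ (forall c, c \in C -> in_ideal P c) /\
  (forall p, p \in P -> premT p C = 0).

Definition inKX (F : A) : bool :=
  all (fun m => F@_m == (F@_m@_mnm0)%:MP) (msupp F).

Definition parametric (P : seq A) : bool :=
  (P != [::]) && all (fun F => ~~ inKX F) P.

Inductive wu_dec : seq A -> seq (seq A) -> Prop :=
| WuContra (P C : seq A) :
    charset P C -> contra_chain C -> wu_dec P [:: C]
| WuStep (P C : seq A) (Ss : seq (seq (seq A))) :
    charset P C -> noncontra_chain C -> size Ss = size C ->
    (forall i, (i < size C)%N ->
       wu_dec (P ++ C ++ [:: init (nth 0 C i)]) (nth [::] Ss i)) ->
    wu_dec P (C :: flatten Ss).

(* Lc = [C_{l,1};..;C_{l,k}] is a line of S with systems Ps = [P_1;..;P_k] *)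
Definition is_line (P1 : seq A) (S Lc Ps : seq (seq A)) : Prop :=
  let k := size Lc in
  [/\ (0 < k)%N, size Ps = k, {subset Lc <= S} & nth [::] Ps 0 = P1] /\
  [/\
(forall i, (i < k)%N -> charset (nth [::] Ps i) (nth [::] Lc i)),
      (forall i, (0 < i < k)%N ->
         exists2 C, C \in nth [::] Lc i.-1 &
           nth [::] Ps i = nth [::] Ps i.-1 ++ nth [::] Lc i.-1 ++ [:: init C]),
      (forall i, (i.+1 < k)%N -> noncontra_chain (nth [::] Lc i)) &
      contra_chain (nth [::] Lc k.-1)].

Variables (L : fieldType) (iota : {rmorphism K -> L}).

Definition evalU (a : 'I_d -> L) (c : KU) : L := (map_mpoly iota c).@[a].

Definition spec (a : 'I_d -> L) (F : A) : {mpoly L[n]} := map_mpoly (evalU a) F.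

Definition inVU (B : seq KU) (a : 'I_d -> L) : bool :=
  all (fun c => evalU a c == 0) B.

End Wu.

From HB Require Import structures.
From mathcomp Require Import all_boot all_order all_algebra.
From mathcomp Require Import mpoly.
Set Implicit Arguments. Unset Strict Implicit. Unset Printing Implicit Defensive.
Import GRing.Theory.
Local Open Scope ring_scope.

(* Specialization U |-> a is a ring morphism K[U][X] -> L[X] that kills a
   polynomial only if it kills all of its X-coefficients.  So if every
   polynomial of P_i specializes to 0, so does the ideal <P_i>, hence the
   characteristic set C_{l,i}, and so do the initials of its elements;
   therefore every polynomial of P_{i+1} = P_i u C_{l,i} u {I(C)} specializes
   to 0 as well.  Propagating to the end of the line, every element of C_{l,k}
   specializes to 0, so its constant coefficient vanishes at a, i.e.
   a \in V^U(C_{l,k}). *)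

Section Specialization.
Variables (K : fieldType) (L : fieldType) (iota : {rmorphism K -> L}) (d n : nat).
Variable a : 'I_d -> L.
Local Notation A := {mpoly {mpoly K[d]}[n]}.

Definition evalU_rmorphism : {rmorphism {mpoly K[d]} -> L} :=
  (meval a \o map_mpoly iota)%FUN.

Lemma evalUE c : evalU iota a c = evalU_rmorphism c.
Proof. by []. Qed.

Lemma specE (F : A) : spec iota a F = map_mpoly evalU_rmorphism F.
Proof. by []. Qed.

Definition spec_vanish (P : seq A) : Prop :=
  forall p, p \in P -> spec iota a p = 0.

Lemma spec_vanish_cat {P Q : seq A} :
  spec_vanish P -> spec_vanish Q -> spec_vanish (P ++ Q).
Proof. by move=> vP vQ p; rewrite mem_cat => /orP[/vP|/vQ]. Qed.

Lemma spec_eq0_coef {F : A} (m : 'X_{1..n}) :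
  spec iota a F = 0 -> evalU_rmorphism F@_m = 0.
Proof.
by move=> F0; rewrite -(mcoeff_map_mpoly evalU_rmorphism) -specE F0 mcoeff0.
Qed.

Lemma spec_in_ideal {P : seq A} {f : A} :
  spec_vanish P -> in_ideal P f -> spec iota a f = 0.
Proof.
move=> vP [cs ->]; rewrite specE rmorph_sum big1 // => i _.
by rewrite rmorphM [X in _ * X](vP _ (mem_nth 0 (ltn_ord i))) mulr0.
Qed.

Lemma spec_init (C : A) : spec iota a C = 0 -> spec iota a (init C) = 0.
Proof.
rewrite /init; case: (mvar C) => [j C0|//].
rewrite /lead_coef /uni coef_sum specE rmorph_sum big1 // => m _.
rewrite coefMXn; case: ifP => _; first exact: rmorph0.
rewrite coefC; case: ifP => _; last exact: rmorph0.
rewrite -mul_mpolyC rmorphM /= map_mpolyC.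
by rewrite [X in X%:MP_[n] * _](spec_eq0_coef m C0) mpolyC0 mul0r.
Qed.

Lemma spec_charset {P C : seq A} :
  charset P C -> spec_vanish P -> spec_vanish C.
Proof. by move=> [_ [inP _]] vP c /inP; apply: spec_in_ideal. Qed.

Lemma inVU_spec_vanish (C : seq A) :
  spec_vanish C -> inVU iota [seq F@_mnm0 | F <- C] a.
Proof.
by move=> vC; apply/allP=> _ /mapP[F /vC F0 ->]; rewrite evalUE spec_eq0_coef.
Qed.

Section Line.
Variables (P1 : seq A) (S Lc Ps : seq (seq A)).
Hypothesis line : is_line P1 S Lc Ps.

Lemma line_spec_vanish_step i :
  (i.+1 < size Lc)%N ->
  spec_vanish (nth [::] Ps i) -> spec_vanish (nth [::] Ps i.+1).
Proof.
have [_ [chars step _ _]] := line.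
move=> lt_i1 vP; have lt_i := ltnW lt_i1.
have vC := spec_charset (chars i lt_i) vP.
have [C /vC C0 ->] := step i.+1 lt_i1.
apply: spec_vanish_cat => //; apply: spec_vanish_cat => // p.
by rewrite mem_seq1 => /eqP ->; apply: spec_init.
Qed.

Lemma line_spec_vanish i j :
  (i <= j)%N -> (j < size Lc)%N ->
  spec_vanish (nth [::] Ps i) -> spec_vanish (nth [::] Ps j).
Proof.
elim: j => [|j IHj]; first by rewrite leqn0 => /eqP ->.
rewrite leq_eqVlt ltnS => /predU1P[-> //|le_ij] lt_j vPi.
exact: line_spec_vanish_step lt_j (IHj le_ij (ltnW lt_j) vPi).
Qed.

End Line.
End Specialization.

Theorem lemma1 (K : fieldType) (L : closedFieldType) (iota : {rmorphism K -> L})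
  (L_algebraic : forall x : L, exists2 p : {poly K}, p != 0 & root (map_poly iota p) x)
  (d n : nat) (P1 : seq {mpoly {mpoly K[d]}[n]})
  (S Lc Ps : seq (seq {mpoly {mpoly K[d]}[n]})) :
  parametric P1 -> wu_dec P1 S -> is_line P1 S Lc Ps ->
  forall a : 'I_d -> L,
    ~~ inVU iota [seq F@_mnm0 | F <- nth [::] Lc (size Lc).-1] a ->
    forall i, (i < size Lc)%N ->
      exists2 p, p \in nth [::] Ps i & spec iota a p != 0.
Proof.
move=> _ _ line a notVU i lt_i.
have [[k_gt0 _ _ _] [chars _ _ _]] := line.
have lt_k : ((size Lc).-1 < size Lc)%N by rewrite prednK.
have [/hasP //|/hasPn vPi] := boolP (has (fun p => spec iota a p != 0) (nth [::] Ps i)).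
have vP : spec_vanish iota a (nth [::] Ps i) by move=> p /vPi /negPn /eqP.
have le_ik : (i <= (size Lc).-1)%N by rewrite -ltnS prednK.
have vPk := line_spec_vanish line le_ik lt_k vP.
have vCk := spec_charset (chars _ lt_k) vPk.
by case/negP: notVU; apply: inVU_spec_vanish.
Qed.
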